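(* Let $R$ be a reduced root system and let $W$ be its Weyl group. Let $(t_1,\ldots,t_n)$ be an $n$-tuple of reflections in $W$ with $t_1t_2\cdots t_n=1$. Then $n$ is even and $(t_1,\ldots,t_n)$ is braid-equivalent to an $n$-tuple $(t'_1,\ldots,t'_n)$ of reflections with $t'_1\cdots t'_n=1$ and $t'_{2i-1}=t'_{2i}$ for $i=1,\ldots,n/2$.
   Context: For a group $G$, an elementary transformation (braid move) of an $n$-tuple $(t_1,\ldots,t_n)\in G^n$ is, for some $1\leq i\leq n-1$, either the replacement of $(t_i,t_{i+1})$ by $(t_it_{i+1}t_i^{-1},t_i)$ or by $(t_{i+1},t_{i+1}^{-1}t_it_{i+1})$, leaving the other entries unchanged. Two $n$-tuples are braid-equivalent if one is obtained from the other by a finite sequence of elementary transformations. *)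

From Stdlib Require Import Relation_Operators.
From HB Require Import structures.
From mathcomp Require Import all_boot all_order all_algebra.
From mathcomp Require Import reals.
Set Implicit Arguments. Unset Strict Implicit. Unset Printing Implicit Defensive.
Import Order.TTheory GRing.Theory Num.Theory.
Local Open Scope ring_scope.

Definition dotv (R : realType) (d : nat) (u v : 'rV[R]_d) : R := (u *m v^T) 0 0.

(* Matrix of the orthogonal reflection s_a (vectors act on the right:
   v *m refl a = v - (2 (v,a)/(a,a)) a). *)
Definition refl (R : realType) (d : nat) (a : 'rV[R]_d) : 'M[R]_d :=
  1%:M - (2 / dotv a a) *: (a^T *m a).

(* Reduced (crystallographic) root system in V, in the sense of Bourbaki:
   a finite set of nonzero vectors spanning V, stable under its reflections,
   with integral Cartan numbers, and reduced. *)
Definition reduced_root_system (R : realType) (d : nat) (Rs : seq 'rV[R]_d) : Prop :=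
  [/\ (0 : 'rV[R]_d) \notin Rs,
      \rank (\matrix_(i < size Rs) nth 0 Rs i) = d,
      (forall a b, a \in Rs -> b \in Rs -> b *m refl a \in Rs),
      (forall a b, a \in Rs -> b \in Rs ->
          exists z : int, 2 * dotv a b / dotv a a = z%:~R) &
      (forall a (c : R), a \in Rs -> c *: a \in Rs -> c = 1 \/ c = -1)].

Definition is_reflection (R : realType) (d : nat) (Rs : seq 'rV[R]_d)
  (t : 'M[R]_d) : Prop := exists2 a, a \in Rs & t = refl a.

Definition prodmx (R : realType) (d : nat) (s : seq 'M[R]_d) : 'M[R]_d :=
  foldr (fun x y => x *m y) 1%:M s.

Definition braid_step (R : realType) (d : nat) (s s' : seq 'M[R]_d) : Prop :=
  exists (l r : seq 'M[R]_d) (x y : 'M[R]_d),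
    s = l ++ x :: y :: r /\
    (s' = l ++ (x *m y *m invmx x) :: x :: r \/
     s' = l ++ y :: (invmx y *m x *m y) :: r).

Definition braid_equiv (R : realType) (d : nat) : seq 'M[R]_d -> seq 'M[R]_d -> Prop :=
  clos_refl_trans _ (@braid_step R d).

From Stdlib Require Import Relation_Operators Classical.
From HB Require Import structures.
From mathcomp Require Import all_boot all_order all_algebra.
From mathcomp Require Import reals ring lra.
Import Order.TTheory GRing.Theory Num.Theory.
Local Open Scope ring_scope.
Set Implicit Arguments. Unset Strict Implicit. Unset Printing Implicit Defensive.

(* Fix a vector v orthogonal to no root and follow the walk v, v t1, v t1 t2, ...,
   v t1...tn = v; its potential is the sum of the heights (w, v) of the points w
   on the walk.  The walk starts by going down, since (v s_a, v) < (v, v), and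
   ends at its starting height, so it has a valley w between two consecutive
   reflections x, y.  If x <> y, one of the two braid moves at that position
   replaces w by w x y or w y x, and a planar computation with the strict
   Cauchy-Schwarz inequality shows that one of these is higher than w.  The
   potential takes finitely many values, so repeating this yields a pair u, u of
   equal neighbours; braid moves carry it to the front, where it cancels, and
   induction on n finishes. *)

Local Arguments rt_step {A R x y}.
Local Arguments rt_refl {A R x}.
Local Arguments rt_trans {A R x y z}.

Section EuclideanReflections.
Variables (R : realType) (d : nat).
Implicit Types (u w a b : 'rV[R]_d).

Lemma dotvC u w : dotv u w = dotv w u.
Proof. by rewrite /dotv -{1}[u *m _]trmxK trmx_mul trmxK mxE. Qed.

Lemma dotvDl u u' w : dotv (u + u') w = dotv u w + dotv u' w.
Proof. by rewrite /dotv mulmxDl mxE. Qed.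

Lemma dotvZl k u w : dotv (k *: u) w = k * dotv u w.
Proof. by rewrite /dotv -scalemxAl mxE. Qed.

Lemma dotvBl u u' w : dotv (u - u') w = dotv u w - dotv u' w.
Proof. by rewrite dotvDl -scaleN1r dotvZl mulN1r. Qed.

Lemma dotvBr u w w' : dotv u (w - w') = dotv u w - dotv u w'.
Proof. by rewrite dotvC dotvBl !(dotvC u). Qed.

Lemma dotvZr k u w : dotv u (k *: w) = k * dotv u w.
Proof. by rewrite dotvC dotvZl dotvC. Qed.

Lemma dotv_mulmxl u w (M : 'M[R]_d) : dotv (u *m M) w = dotv u (w *m M^T).
Proof. by rewrite /dotv trmx_mul trmxK mulmxA. Qed.

Lemma dotv_eq0 u : (dotv u u == 0) = (u == 0).
Proof.
apply/idP/eqP=> [|->]; last by rewrite /dotv mul0mx mxE.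
rewrite /dotv !mxE psumr_eq0 => [/allP u0|i _]; last by rewrite mxE -expr2 sqr_ge0.
apply/rowP=> i; apply/eqP; rewrite mxE -sqrf_eq0 expr2.
by have /implyP/(_ isT) := u0 i (mem_index_enum i); rewrite mxE.
Qed.

Lemma dotv_ge0 u : 0 <= dotv u u.
Proof. by rewrite /dotv mxE; apply: sumr_ge0 => i _; rewrite mxE -expr2 sqr_ge0. Qed.

Lemma dotv_gt0 u : u != 0 -> 0 < dotv u u.
Proof. by move=> u0; rewrite lt_def dotv_eq0 u0 dotv_ge0. Qed.

Lemma reflE a u : u *m refl a = u - (2 * dotv u a / dotv a a) *: a.
Proof.
rewrite /refl mulmxBr mulmx1 -scalemxAr mulmxA.
have -> : u *m a^T = (dotv u a)%:M by apply/matrixP=> i j; rewrite !ord1 [RHS]mxE eqxx mulr1n.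
by rewrite mul_scalar_mx scalerA mulrAC.
Qed.

Lemma dotv_refll a u w :
  dotv (u *m refl a) w = dotv u w - 2 * dotv u a / dotv a a * dotv a w.
Proof. by rewrite reflE dotvBl dotvZl. Qed.

Lemma dotv_refl_lt v a :
  a != 0 -> dotv v a != 0 -> dotv (v *m refl a) v < dotv v v.
Proof.
move=> a0 va0; rewrite dotv_refll gtrBl (dotvC a v).
rewrite (_ : _ * _ = 2 * dotv v a ^+ 2 / dotv a a); last by rewrite expr2; ring.
by rewrite divr_gt0 ?dotv_gt0 // mulr_gt0 // lt_def sqrf_eq0 va0 sqr_ge0.
Qed.

Lemma trmx_refl a : (refl a)^T = refl a.
Proof. by rewrite /refl linearB /= linearZ /= trmx_mul trmxK trmx1. Qed.

Lemma row_mx_eq (A B : 'M[R]_d) : (forall u : 'rV[R]_d, u *m A = u *m B) -> A = B.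
Proof. by move=> AB; apply/row_matrixP=> i; rewrite !rowE AB. Qed.

Lemma refl_sqr a : a != 0 -> refl a *m refl a = 1%:M.
Proof.
move=> a0; have aa0 := lt0r_neq0 (dotv_gt0 a0).
apply: row_mx_eq => u; rewrite mulmx1 mulmxA [u *m _ *m _]reflE dotv_refll reflE.
set c := 2 * dotv u a / dotv a a.
have -> : 2 * (dotv u a - c * dotv a a) / dotv a a = - c by rewrite /c; field.
by rewrite scaleNr opprK subrK.
Qed.

Lemma invmx_refl a : a != 0 -> invmx (refl a) = refl a.
Proof.
move=> a0; have aa := refl_sqr a0; have [aU _] := mulmx1_unit aa.
by rewrite -[LHS]mul1mx -aa -mulmxA mulmxV // mulmx1.
Qed.

Lemma refl_conj a b :
  b != 0 -> refl b *m refl a *m refl b = refl (a *m refl b).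
Proof.
move=> b0; apply: row_mx_eq => u; rewrite !mulmxA [u *m _ *m refl a]reflE.
rewrite mulmxBl -scalemxAl -mulmxA refl_sqr // mulmx1 [RHS]reflE.
by rewrite !dotv_mulmxl trmx_refl -!mulmxA refl_sqr // mulmx1.
Qed.

Lemma reflZ k a : k != 0 -> refl (k *: a) = refl a.
Proof.
move=> k0; have [->|a0] := eqVneq a 0; first by rewrite scaler0.
have aa0 := lt0r_neq0 (dotv_gt0 a0).
apply: row_mx_eq => u; rewrite !reflE dotvZr dotvZl dotvZr scalerA.
by congr (_ - _ *: _); field; rewrite k0 aa0.
Qed.

Lemma dotv_sqr_lt a b :
  a != 0 -> b != 0 -> refl a != refl b -> dotv a b ^+ 2 < dotv a a * dotv b b.
Proof.
move=> a0 b0; have aa0 := dotv_gt0 a0; apply: contraR; rewrite -leNgt => ab.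
pose g := dotv a a *: b - dotv a b *: a.
have g0 : g = 0.
  apply/eqP; rewrite -dotv_eq0 eq_le dotv_ge0 andbT.
  suff -> : dotv g g = dotv a a * (dotv a a * dotv b b - dotv a b ^+ 2).
    by rewrite pmulr_rle0 // subr_le0.
  by rewrite /g !dotvBl !dotvBr !dotvZl !dotvZr (dotvC b a); ring.
have Eb : b = (dotv a b / dotv a a) *: a.
  apply: (scalerI (lt0r_neq0 aa0)); rewrite scalerA mulrC divfK ?lt0r_neq0 //.
  by apply/eqP; rewrite -subr_eq0 -/g g0.
have k0 : dotv a b / dotv a a != 0 by apply: contraNneq b0 => k0; rewrite Eb k0 scale0r.
by rewrite Eb reflZ.
Qed.

Lemma refl_pair_ascent v w a b :
  a != 0 -> b != 0 -> refl a != refl b ->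
  dotv w v < dotv (w *m refl a) v -> dotv w v < dotv (w *m refl b) v ->
  dotv w v < dotv (w *m refl a *m refl b) v \/
  dotv w v < dotv (w *m refl b *m refl a) v.
Proof.
move=> a0 b0 ab; have cs := dotv_sqr_lt a0 b0 ab.
have A0 := dotv_gt0 a0; have B0 := dotv_gt0 b0.
rewrite !dotv_refll (dotvC b a).
set A := dotv a a in A0 cs *; set B := dotv b b in B0 cs *; set g := dotv a b in cs *.
set F := dotv w v; set X := dotv a v; set Y := dotv b v.
set ca := 2 * dotv w a / A; set cb := 2 * dotv w b / B.
pose p := - (ca * X); pose q := - (cb * Y).
pose U := - (ca * (2 * g / B) * Y); pose V := - (cb * (2 * g / A) * X).
have -> : F - ca * X - 2 * (dotv w b - ca * g) / B * Y = F + (p + q - U).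
  by rewrite /p /q /U /cb; field; rewrite !lt0r_neq0.
have -> : F - cb * Y - 2 * (dotv w a - cb * g) / A * X = F + (p + q - V).
  by rewrite /p /q /V /ca; field; rewrite !lt0r_neq0.
rewrite !ltrDl !subr_gt0 => lt_pq_U lt_pq_V; have p0 : 0 < p by rewrite /p; lra.
have q0 : 0 < q by rewrite /q; lra.
have [|le_U] := ltP U (p + q); [by left | right; rewrite ltNge; apply/negP => le_V].
(* By AM-GM this contradicts U V = 4 p q (a,b)^2/((a,a)(b,b)) < 4 p q. *)
have amgm : 4 * p * q <= U * V.
  have : (p + q) * (p + q) <= U * V by apply: ler_pM; lra.
  have : 0 <= (p - q) ^+ 2 := sqr_ge0 _.
  nra.
have UV : U * V = 4 * p * q * (g ^+ 2 / (A * B)).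
  by rewrite /U /V /p /q; field; rewrite !lt0r_neq0.
have cs1 : g ^+ 2 / (A * B) < 1 by rewrite ltr_pdivrMr ?mulr_gt0 // mul1r.
have pq0 : 0 < 4 * p * q by rewrite !mulr_gt0.
by move: amgm; rewrite UV ler_pMr // leNgt cs1.
Qed.
End EuclideanReflections.

Section Braid.
Variables (R : realType) (d : nat).
Implicit Types (s l r : seq 'M[R]_d) (x y u : 'M[R]_d).

Lemma braid_step_size s s' : braid_step s s' -> size s' = size s.
Proof. by move=> [l [r [x [y [-> [|] ->]]]]]; rewrite !size_cat. Qed.

Lemma braid_equiv_size s s' : braid_equiv s s' -> size s' = size s.
Proof.
by elim=> {s s'} [s s' /braid_step_size|//|s1 s2 s3 _ -> _ ->].
Qed.

Lemma braid_step_catl l s s' : braid_step s s' -> braid_step (l ++ s) (l ++ s').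
Proof.
move=> [l0 [r0 [x [y [-> mv]]]]]; exists (l ++ l0), r0, x, y.
by rewrite -!catA; split=> //; case: mv => ->; [left|right]; rewrite catA.
Qed.

Lemma braid_equiv_catl l s s' : braid_equiv s s' -> braid_equiv (l ++ s) (l ++ s').
Proof.
elim=> {s s'} [s s' st|s|s1 s2 s3 _ e12 _ e23].
- exact/rt_step/braid_step_catl.
- exact: rt_refl.
- exact: rt_trans e12 e23.
Qed.

Lemma braid_equiv_pair_front l u r :
  exists u', braid_equiv (l ++ u :: u :: r) (u' :: u' :: l ++ r).
Proof.
elim: l u => [|x l IHl] u; first by exists u; apply: rt_refl.
have [u' e] := IHl u; exists (x *m u' *m invmx x).
apply: rt_trans (braid_equiv_catl [:: x] e) _; apply: rt_trans.
  by apply: rt_step; exists [::], (u' :: l ++ r), x, u'; split=> //; left.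
by apply: rt_step; exists [:: x *m u' *m invmx x], (l ++ r), x, u'; split=> //; left.
Qed.

Lemma prodmx_cat l r : prodmx (l ++ r) = prodmx l *m prodmx r.
Proof. by elim: l => [|x l IH] /=; rewrite ?mul1mx // IH mulmxA. Qed.

Lemma prodmx_swap l r x y x' y' : x' *m y' = x *m y ->
  prodmx (l ++ x' :: y' :: r) = prodmx (l ++ x :: y :: r).
Proof. by move=> xy; rewrite !prodmx_cat /= (mulmxA x') xy -mulmxA. Qed.

Definition doubled (us : seq 'M[R]_d) : seq 'M[R]_d := flatten [seq [:: u; u] | u <- us].

Lemma size_doubled us : size (doubled us) = (size us).*2.
Proof. by elim: us => //= u us IH; rewrite IH doubleS. Qed.

Lemma nth_doubled x0 us i : nth x0 (doubled us) i.*2 = nth x0 (doubled us) i.*2.+1.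
Proof. by elim: us i => [|u us IH] [|i] //=; rewrite nth_nil. Qed.

End Braid.

Fixpoint words (T : Type) (L : seq T) (n : nat) : seq (seq T) :=
  if n is n'.+1 then [seq x :: s | x <- L, s <- words L n'] else [:: [::]].

Lemma mem_words (T : eqType) (L s : seq T) : {subset s <= L} -> s \in words L (size s).
Proof.
elim: s => [|x s IH] sL /=; first by rewrite inE.
apply: allpairs_f; first by apply: sL; rewrite mem_head.
by apply: IH => y ys; apply: sL; rewrite inE ys orbT.
Qed.

Lemma count_lt_subpred (T : eqType) (a1 a2 : pred T) (s : seq T) x :
  subpred a1 a2 -> x \in s -> a2 x -> ~~ a1 x -> (count a1 s < count a2 s)%N.
Proof.
move=> a12 xs a2x a1x; rewrite !(permP (perm_to_rem xs)) /= a2x (negbTE a1x).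
by rewrite add0n add1n ltnS sub_count.
Qed.

Definition regular_vector (R : realType) (d : nat) (Rs : seq 'rV[R]_d)
  (p : 'rV[R]_d) :=
  forall b, b \in Rs -> dotv p b != 0.

Lemma exists_notin (R : numDomainType) (s : seq R) : exists e, e \notin s.
Proof.
pose S := \sum_(x <- s) `|x|; have S0 : 0 <= S by rewrite sumr_ge0.
have le_S x : x \in s -> `|x| <= S.
  by move=> /perm_to_rem es; rewrite /S (perm_big _ es) big_cons lerDl sumr_ge0.
by exists (1 + S); apply/negP => /le_S; rewrite ger0_norm ?addr_ge0 // lt_geF // ltrDr ltr01.
Qed.

Lemma exists_regular_vector (R : realType) (d : nat) (L : seq 'rV[R]_d) :
  0 \notin L -> exists v, regular_vector L v.
Proof.
elim: L => [|b L IH]; first by exists 0.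
rewrite inE negb_or eq_sym => /andP[b0 /IH[v vg]].
have [e e_good] := exists_notin [seq - dotv v c / dotv b c | c <- b :: L].
exists (v + e *: b) => c cbL; rewrite dotvDl dotvZl.
have [bc0|bc0] := eqVneq (dotv b c) 0.
  rewrite bc0 mulr0 addr0; apply: vg; move: cbL; rewrite inE => /predU1P[cb|//].
  by move: bc0; rewrite cb => /eqP; rewrite dotv_eq0 (negbTE b0).
apply: contraNneq e_good => vc_e; apply/mapP; exists c => //.
by apply: (mulIf bc0); rewrite divfK // -(addKr (dotv v c) (e * _)) vc_e addr0.
Qed.

Section ReflectionFactorizations.
Variables (R : realType) (d : nat) (Rs : seq 'rV[R]_d).
Hypothesis Rs_neq0 : 0 \notin Rs.
Hypothesis Rs_refl : forall a b, a \in Rs -> b \in Rs -> b *m refl a \in Rs.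
Implicit Types (s l r : seq 'M[R]_d) (t x y : 'M[R]_d) (p q w : 'rV[R]_d).

Definition reflection_seq s := forall t, t \in s -> is_reflection Rs t.

Lemma root_neq0 a : a \in Rs -> a != 0.
Proof. by apply: contraTneq => ->. Qed.

Lemma reflection_sqr t : is_reflection Rs t -> t *m t = 1%:M.
Proof. by case=> a /root_neq0 a0 ->; rewrite refl_sqr. Qed.

Lemma reflection_inv t : is_reflection Rs t -> invmx t = t.
Proof. by case=> a /root_neq0 a0 ->; rewrite invmx_refl. Qed.

Lemma reflection_conj x y :
  is_reflection Rs x -> is_reflection Rs y -> is_reflection Rs (x *m y *m invmx x).
Proof.
move=> [a aR ->] [b bR ->]; have a0 := root_neq0 aR.
by rewrite invmx_refl // refl_conj //; exists (b *m refl a) => //; apply: Rs_refl.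
Qed.

Lemma reflection_seq_swap l r x y x' y' :
  reflection_seq (l ++ x :: y :: r) -> is_reflection Rs x' -> is_reflection Rs y' ->
  reflection_seq (l ++ x' :: y' :: r).
Proof.
move=> sR x'R y'R t; rewrite !(mem_cat, inE) => /or3P[tl|/eqP->|/orP[/eqP->|tr]] //.
all: by apply: sR; rewrite !(mem_cat, inE) ?tl ?tr ?orbT.
Qed.

Lemma braid_step_reflection_seq s s' : reflection_seq s -> braid_step s s' ->
  reflection_seq s' /\ prodmx s' = prodmx s.
Proof.
move=> sR [l [r [x [y [Es mv]]]]]; subst s.
have xR : is_reflection Rs x by apply: sR; rewrite mem_cat mem_head orbT.
have yR : is_reflection Rs y by apply: sR; rewrite !(mem_cat, inE) eqxx !orbT.
have yxyR : is_reflection Rs (invmx y *m x *m y).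
  by have := reflection_conj yR xR; rewrite (reflection_inv yR).
case: mv => ->; split.
- exact: reflection_seq_swap sR (reflection_conj xR yR) xR.
- by apply: prodmx_swap; rewrite (reflection_inv xR) -!mulmxA (reflection_sqr xR) mulmx1.
- exact: reflection_seq_swap sR yR yxyR.
- by apply: prodmx_swap; rewrite (reflection_inv yR) !mulmxA (reflection_sqr yR) mul1mx.
Qed.

Lemma braid_equiv_reflection_seq s s' : reflection_seq s -> braid_equiv s s' ->
  reflection_seq s' /\ prodmx s' = prodmx s.
Proof.
move=> + e; elim: e => {s s'} [s s' st sR|//|s1 s2 s3 _ IH12 _ IH23 s1R].
  exact: braid_step_reflection_seq st.
have [s2R <-] := IH12 s1R; exact: IH23.
Qed.

Section Potential.
Variable v : 'rV[R]_d.
Hypothesis v_regular : regular_vector Rs v.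

Lemma regular_vector_reflection p t :
  regular_vector Rs p -> is_reflection Rs t -> regular_vector Rs (p *m t).
Proof.
by move=> pg [a aR ->] b bR; rewrite dotv_mulmxl trmx_refl; apply/pg/Rs_refl.
Qed.

Lemma dotv_reflection_neq p t :
  regular_vector Rs p -> is_reflection Rs t -> dotv (p *m t) v != dotv p v.
Proof.
move=> pg [a aR ->]; have aa0 := lt0r_neq0 (dotv_gt0 (root_neq0 aR)).
rewrite dotv_refll -subr_eq0 addrC addKr oppr_eq0 (dotvC a v).
by rewrite !mulf_neq0 ?invr_neq0 ?pnatr_eq0 //; [apply: pg | apply: v_regular].
Qed.

Fixpoint potential p s : R :=
  if s is t :: s' then dotv (p *m t) v + potential (p *m t) s' else 0.

Lemma potential_cat p l r :
  potential p (l ++ r) = potential p l + potential (p *m prodmx l) r.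
Proof.
elim: l p => [|x l IH] p /=; first by rewrite add0r mulmx1.
by rewrite IH addrA mulmxA.
Qed.

Lemma potential_swap p l r x y x' y' : x' *m y' = x *m y ->
  potential p (l ++ x' :: y' :: r) - potential p (l ++ x :: y :: r) =
  dotv (p *m prodmx l *m x') v - dotv (p *m prodmx l *m x) v.
Proof. by move=> xy; rewrite !potential_cat /= -!mulmxA xy; ring. Qed.

Lemma valley_split q t s :
  reflection_seq (t :: s) -> regular_vector Rs q ->
  dotv (q *m t) v < dotv q v -> dotv q v <= dotv (q *m prodmx (t :: s)) v ->
  exists l x y r, [/\ t :: s = l ++ x :: y :: r,
    dotv (q *m prodmx l *m x) v < dotv (q *m prodmx l) v &
    dotv (q *m prodmx l *m x) v < dotv (q *m prodmx l *m x *m y) v].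
Proof.
elim: s t q => [|t' s IH] t q tsR qg down up.
  by move: up; rewrite /= mulmx1 leNgt down.
have tR := tsR t (mem_head _ _).
have [up'|down'] := ltP (dotv (q *m t) v) (dotv (q *m t *m t') v).
  by exists [::], t, t', s; rewrite /= mulmx1.
have t'sR : reflection_seq (t' :: s) by move=> x xs; apply: tsR; rewrite inE xs orbT.
have qtg := regular_vector_reflection qg tR.
have {}down' : dotv (q *m t *m t') v < dotv (q *m t) v.
  by rewrite lt_neqAle down' dotv_reflection_neq //; apply: t'sR; rewrite mem_head.
have {}up : dotv (q *m t) v <= dotv (q *m t *m prodmx (t' :: s)) v.
  by rewrite -mulmxA; apply: le_trans up; apply: ltW.
have [l [x [y [r [-> ??]]]]] := IH t' (q *m t) t'sR qtg down' up.
by exists (t :: l), x, y, r; rewrite /= !mulmxA.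
Qed.

Lemma braid_step_raise_valley l x y r :
  reflection_seq (l ++ x :: y :: r) -> x != y ->
  dotv (v *m prodmx l *m x) v < dotv (v *m prodmx l) v ->
  dotv (v *m prodmx l *m x) v < dotv (v *m prodmx l *m x *m y) v ->
  exists2 s', braid_step (l ++ x :: y :: r) s' &
    potential v (l ++ x :: y :: r) < potential v s'.
Proof.
move=> sR xy; set q := v *m prodmx l; set w := q *m x => down up.
have xR : is_reflection Rs x by apply: sR; rewrite mem_cat mem_head orbT.
have yR : is_reflection Rs y by apply: sR; rewrite !(mem_cat, inE) eqxx !orbT.
have wx : w *m x = q by rewrite -mulmxA reflection_sqr // mulmx1.
move: (xR) (yR) => [a aR Ex] [b bR Ey].
have ab : refl a != refl b by rewrite -Ex -Ey.
have wa : dotv w v < dotv (w *m refl a) v by rewrite -Ex wx.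
have wb : dotv w v < dotv (w *m refl b) v by rewrite -Ey.
have [|] := refl_pair_ascent (root_neq0 aR) (root_neq0 bR) ab wa wb; rewrite -Ex -Ey.
- rewrite wx => up'.
  exists (l ++ y :: invmx y *m x *m y :: r); first by exists l, r, x, y; split=> //; right.
  rewrite -subr_gt0 potential_swap ?subr_gt0 //.
  by rewrite (reflection_inv yR) !mulmxA (reflection_sqr yR) mul1mx.
- move=> up'.
  exists (l ++ x *m y *m invmx x :: x :: r); first by exists l, r, x, y; split=> //; left.
  rewrite -subr_gt0 potential_swap ?subr_gt0 -/q.
    by rewrite (reflection_inv xR) !mulmxA.
  by rewrite (reflection_inv xR) -!mulmxA (reflection_sqr xR) mulmx1.
Qed.

Lemma braid_step_raise s :
  reflection_seq s -> prodmx s = 1%:M -> s != [::] ->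
  (forall l x y r, s = l ++ x :: y :: r -> x != y) ->
  exists2 s', braid_step s s' & potential v s < potential v s'.
Proof.
case: s => [|t s] // sR sP _ no_pair.
have [a aR Et] := sR t (mem_head _ _).
have down : dotv (v *m t) v < dotv v v.
  by rewrite Et dotv_refl_lt ?root_neq0 ?v_regular.
have up : dotv v v <= dotv (v *m prodmx (t :: s)) v by rewrite sP mulmx1.
have [l [x [y [r [Es ??]]]]] := valley_split sR v_regular down up.
by rewrite Es; apply: braid_step_raise_valley; rewrite -?Es //; apply: no_pair Es.
Qed.

Lemma braid_equiv_adjacent_pair s :
  reflection_seq s -> prodmx s = 1%:M -> s != [::] ->
  exists l u r, braid_equiv s (l ++ u :: u :: r).
Proof.
pose L := [seq refl a | a <- Rs].
have sub_L s' : reflection_seq s' -> {subset s' <= L}.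
  by move=> s'R t /s'R[a aR ->]; apply: map_f.
(* The potential takes finitely many values on words of a given length. *)
pose mu s' := count (fun z => potential v s' < potential v z) (words L (size s')).
have [n] := ubnP (mu s); elim: n s => // n IH s lt_mu sR sP s0.
have [[l [u [r ->]]]|no_pair] := classic (exists l u r, s = l ++ u :: u :: r).
  by exists l, u, r; apply: rt_refl.
have [s' st up] : exists2 s', braid_step s s' & potential v s < potential v s'.
  apply: braid_step_raise => // l x y r Es; apply/eqP => Exy.
  by apply: no_pair; exists l, x, r; rewrite Es Exy.
have [s'R s'P] := braid_step_reflection_seq sR st.
have size_s' := braid_step_size st.
have lt_mu' : (mu s' < mu s)%N.
  rewrite /mu size_s' (count_lt_subpred (x := s')) ?ltxx //.
    by move=> z /= /(lt_trans up).
  by rewrite -size_s'; apply/mem_words/sub_L.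
have s'0 : s' != [::] by rewrite -size_eq0 size_s' size_eq0.
have [l [u [r e]]] := IH s' (leq_trans lt_mu' lt_mu) s'R (etrans s'P sP) s'0.
by exists l, u, r; exact: rt_trans (rt_step st) e.
Qed.

Lemma braid_equiv_doubled s :
  reflection_seq s -> prodmx s = 1%:M -> exists us, braid_equiv s (doubled us).
Proof.
have [n] := ubnP (size s); elim: n s => // n IH s lt_s sR sP.
have [->|s0] := eqVneq s [::]; first by exists [::]; apply: rt_refl.
have [l [u [r e1]]] := braid_equiv_adjacent_pair sR sP s0.
have [u' e2] := braid_equiv_pair_front l u r.
have e := rt_trans e1 e2.
have [u'lrR u'lrP] := braid_equiv_reflection_seq sR e.
have lrR : reflection_seq (l ++ r) by move=> t tlr; apply: u'lrR; rewrite !inE tlr !orbT.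
have lrP : prodmx (l ++ r) = 1%:M.
  have u'R : is_reflection Rs u' by apply: u'lrR; rewrite mem_head.
  by move: u'lrP; rewrite sP /= mulmxA reflection_sqr ?mul1mx.
have lt_lr : (size (l ++ r) < n)%N.
  by rewrite -ltnS; apply: leq_trans lt_s; rewrite -(braid_equiv_size e) /= ltnS leqnSn.
have [us e3] := IH _ lt_lr lrR lrP.
by exists (u' :: us); apply: rt_trans e (braid_equiv_catl [:: u'; u'] e3).
Qed.

End Potential.
End ReflectionFactorizations.

Theorem proposition2p3 (R : realType) (d : nat) (Rs : seq 'rV[R]_d)
  (ts : seq 'M[R]_d) :
  reduced_root_system Rs ->
  (forall t, t \in ts -> is_reflection Rs t) ->
  prodmx ts = 1%:M ->
  ~~ odd (size ts) /\
  exists ts' : seq 'M[R]_d,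
    [/\ braid_equiv ts ts',
        size ts' = size ts,
        (forall t, t \in ts' -> is_reflection Rs t),
        prodmx ts' = 1%:M &
        (forall i, (i < (size ts) %/ 2)%N ->
           nth 0 ts' i.*2 = nth 0 ts' i.*2.+1)].
Proof.
move=> [Rs_neq0 _ Rs_refl _ _] tsR tsP.
have [v v_regular] := exists_regular_vector Rs_neq0.
have [us e] := braid_equiv_doubled Rs_neq0 Rs_refl v_regular tsR tsP.
have [usR usP] := braid_equiv_reflection_seq Rs_neq0 Rs_refl tsR e.
have size_us := braid_equiv_size e.
split; first by rewrite -size_us size_doubled odd_double.
exists (doubled us); split=> //; first by rewrite usP.
by move=> i _; apply: nth_doubled.
Qed.
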